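(* Let $\mathbb{T}$ be a geometric theory over $\Sigma$ with enough $\mathbb{S}$-indexed models. The functor $\mathcal{M}:\mathcal{C}_{\mathbb{T}}\to\mathrm{Sh}_{I_{\mathbb{T}}}(M_{\mathbb{T}})$, sending $\{\mathbf{x}\mid\phi\}$ to the equivariant sheaf $([\![\mathbf{x}\mid\phi]\!]\xrightarrow{\pi_1}M_{\mathbb{T}},\theta)$ and each arrow to the induced map, is full.
   Context: $\Sigma$ is a single-sorted first-order signature with equality, $\kappa\geq|\Sigma|+\aleph_0$ an infinite cardinal, $\mathbb{S}$ a fixed set of cardinality at least $\kappa$. $M_{\mathbb{T}}$ is the set of $\mathbb{T}$-models whose underlying set is a quotient of a subset of $\mathbb{S}$ (elements $[a]$), $I_{\mathbb{T}}$ the set of isomorphisms between them, with domain/codomain $d,c$. Topologies: $M_{\mathbb{T}}$ has the coarsest topology containing $\{\mathbf{M}:[a]\in\mathbf{M}\}$, $\{\mathbf{M}:[\mathbf{a}]\in R^{\mathbf{M}}\}$ (relation symbols incl.\ equality), $\{\mathbf{M}:f^{\mathbf{M}}([\mathbf{a}])=[b]\}$ (function symbols); $I_{\mathbb{T}}$ the coarsest making $d,c$ continuous and containing $\{\mathbf{f}:[a]\in d(\mathbf{f}),[b]\in c(\mathbf{f}),\mathbf{f}([a])=[b]\}$. $\mathbb{T}$ has enough $\mathbb{S}$-indexed models if every geometric sequent true in all of $M_{\mathbb{T}}$ is provable. $\mathcal{C}_{\mathbb{T}}$ is the syntactic category of $\mathbb{T}$. $[\![\mathbf{x}\mid\phi]\!]=\{(\mathbf{M},[\mathbf{a}]):\mathbf{M}\in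 M_{\mathbb{T}},[\mathbf{a}]\in\phi^{\mathbf{M}}\}$ carries the coarsest topology making the projection $\pi_1$ continuous and such that for every tuple $\mathbf{a}$ the image of $\mathbf{M}\mapsto(\mathbf{M},[\mathbf{a}])$ on $\{\mathbf{M}:[\mathbf{a}]\in\phi^{\mathbf{M}}\}$ is open; $\theta(\mathbf{f}:\mathbf{M}\to\mathbf{N},(\mathbf{M},[\mathbf{a}]))=(\mathbf{N},\mathbf{f}([\mathbf{a}]))$. $\mathrm{Sh}_{I_{\mathbb{T}}}(M_{\mathbb{T}})$ is the topos of equivariant sheaves on $I_{\mathbb{T}}\rightrightarrows M_{\mathbb{T}}$. *)

From mathcomp Require Import all_boot.

Set Implicit Arguments.
Unset Strict Implicit.
Unset Printing Implicit Defensive.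

(* Single-sorted first-order signature (equality is built in).        *)
Record signature := Sig {
  Fsym : Type; Rsym : Type;
  farity : Fsym -> nat; rarity : Rsym -> nat }.

Section Syntax.
Variable L : signature.

Inductive term (n : nat) : Type :=
| Var of 'I_n
| App (f : Fsym L) of ('I_(farity f) -> term n).

(* geometric formulas in context n; FEx binds variable ord0 of the
   extended context; FDisj is an arbitrary (set/type-indexed) disjunction *)
Inductive form : nat -> Type :=
| FTop n : form n
| FEq n : term n -> term n -> form n
| FRel n (r : Rsym L) : ('I_(rarity r) -> term n) -> form n
| FAnd n : form n -> form n -> form n
| FDisj n (I : Type) : (I -> form n) -> form n
| FEx n : form n.+1 -> form n.

Fixpoint tsubst n m (s : 'I_n -> term m) (t : term n) : term m :=
  match t with
  | Var i => s i
  | App f ts => App (fun j => tsubst s (ts j))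
  end.

Definition tshift n (t : term n) : term n.+1 :=
  tsubst (fun i => Var (lift ord0 i)) t.

Definition up n m (s : 'I_n -> term m) : 'I_n.+1 -> term m.+1 :=
  fun i => match unlift ord0 i with
           | Some j => tshift (s j)
           | None => Var (@ord0 m)
           end.

Fixpoint fsubst n (phi : form n) : forall m, ('I_n -> term m) -> form m :=
  match phi in form n return forall m, ('I_n -> term m) -> form m with
  | FTop _ => fun m _ => FTop m
  | FEq _ t u => fun m s => FEq (tsubst s t) (tsubst s u)
  | FRel _ r ts => fun m s => FRel (fun j => tsubst s (ts j))
  | FAnd _ p q => fun m s => FAnd (fsubst p s) (fsubst q s)
  | FDisj _ J f => fun m s => FDisj (fun i => fsubst (f i) s)
  | FEx _ p => fun m s => FEx (fsubst p (up s))
  end.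

Definition fshift n (phi : form n) : form n.+1 :=
  fsubst phi (fun i => Var (lift ord0 i)).

(* existentially quantify the first m variables of context m + n *)
Fixpoint Exs n m : form (m + n) -> form n :=
  match m return form (m + n) -> form n with
  | 0 => fun phi => phi
  | m'.+1 => fun phi => Exs (FEx phi)
  end.

(* Deduction system of geometric logic (Johnstone, Elephant D1.3.1),
   relative to a theory T (a set of sequents phi |-_n psi).            *)
Section Prov.
Variable T : forall n, form n -> form n -> Prop.

Inductive Prov : forall n, form n -> form n -> Prop :=
| P_ax n (phi psi : form n) : T phi psi -> Prov phi psi
| P_refl n (phi : form n) : Prov phi phi
| P_cut n (phi psi chi : form n) : Prov phi psi -> Prov psi chi -> Prov phi chi
| P_subst n m (s : 'I_n -> term m) (phi psi : form n) :
    Prov phi psi -> Prov (fsubst phi s) (fsubst psi s)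
| P_eqrefl n (i : 'I_n) : Prov (FTop n) (FEq (Var i) (Var i))
| P_eqsubst n (i j : 'I_n) (phi : form n) :
    Prov (FAnd (FEq (Var i) (Var j)) phi)
         (fsubst phi (fun k => if k == i then Var j else Var k))
| P_top n (phi : form n) : Prov phi (FTop n)
| P_andl n (phi psi : form n) : Prov (FAnd phi psi) phi
| P_andr n (phi psi : form n) : Prov (FAnd phi psi) psi
| P_andI n (phi psi chi : form n) :
    Prov phi psi -> Prov phi chi -> Prov phi (FAnd psi chi)
| P_disjI n (I : Type) (f : I -> form n) (i : I) : Prov (f i) (FDisj f)
| P_disjE n (I : Type) (f : I -> form n) (psi : form n) :
    (forall i, Prov (f i) psi) -> Prov (FDisj f) psi
| P_exE n (phi : form n.+1) (psi : form n) :
    Prov phi (fshift psi) -> Prov (FEx phi) psi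
| P_exI n (phi : form n.+1) (psi : form n) :
    Prov (FEx phi) psi -> Prov phi (fshift psi)
| P_distr n (phi : form n) (I : Type) (f : I -> form n) :
    Prov (FAnd phi (FDisj f)) (FDisj (fun i => FAnd phi (f i)))
| P_frob n (phi : form n) (psi : form n.+1) :
    Prov (FAnd phi (FEx psi)) (FEx (FAnd (fshift phi) psi)).
End Prov.

(* Semantics: structures whose underlying set is a quotient of a subset
   of S, presented by a partial equivalence relation sE on S (domain =
   {a | sE a a}, elements [a] = classes), with saturated interpretations. *)
Section Sem.
Variable S : Type.

Record structure := Struct {
  sE : S -> S -> Prop;
  sfun : forall f : Fsym L, ('I_(farity f) -> S) -> S -> Prop; (* graph *)
  srel : forall r : Rsym L, ('I_(rarity r) -> S) -> Prop }.
Arguments sfun : clear implicits.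
Arguments srel : clear implicits.

Definition dom (M : structure) (a : S) := sE M a a.

Definition is_structure (M : structure) : Prop :=
  (forall a b, sE M a b -> sE M b a) /\
  (forall a b c, sE M a b -> sE M b c -> sE M a c) /\
  (forall r a, srel M r a -> forall i, dom M (a i)) /\
  (forall r a a', (forall i, sE M (a i) (a' i)) -> srel M r a -> srel M r a') /\
  (forall f a b, sfun M f a b -> (forall i, dom M (a i)) /\ dom M b) /\
  (forall f a a' b b', (forall i, sE M (a i) (a' i)) -> sE M b b' ->
      sfun M f a b -> sfun M f a' b') /\
  (forall f a, (forall i, dom M (a i)) -> exists b, sfun M f a b) /\
  (forall f a b b', sfun M f a b -> sfun M f a b' -> sE M b b').

Fixpoint teval (M : structure) n (env : 'I_n -> S) (t : term n) (b : S) : Prop :=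
  match t with
  | Var i => sE M (env i) b
  | App f ts => exists a, (forall j, teval M env (ts j) (a j)) /\ sfun M f a b
  end.

Definition ext n (s : S) (env : 'I_n -> S) : 'I_n.+1 -> S :=
  fun i => match unlift ord0 i with Some j => env j | None => s end.

Fixpoint sat (M : structure) n (phi : form n) : ('I_n -> S) -> Prop :=
  match phi in form n return ('I_n -> S) -> Prop with
  | FTop _ => fun _ => True
  | FEq _ t u => fun env => exists b, teval M env t b /\ teval M env u b
  | FRel _ r ts => fun env =>
      exists a, (forall j, teval M env (ts j) (a j)) /\ srel M r a
  | FAnd _ p q => fun env => sat M p env /\ sat M q env
  | FDisj _ J f => fun env => exists i, sat M (f i) env
  | FEx _ p => fun env => exists s, dom M s /\ sat M p (ext s env)
  end.

Definition is_model (T : forall n, form n -> form n -> Prop) (M : structure) :=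
  is_structure M /\
  forall n (phi psi : form n), T n phi psi ->
    forall env, (forall i, dom M (env i)) -> sat M phi env -> sat M psi env.

(* isomorphisms, as saturated relations inducing bijections of classes *)
Definition is_iso (M N : structure) (F : S -> S -> Prop) : Prop :=
  (forall a b, F a b -> dom M a /\ dom N b) /\
  (forall a a' b b', sE M a a' -> sE N b b' -> F a b -> F a' b') /\
  (forall a b b', F a b -> F a b' -> sE N b b') /\
  (forall a a' b, F a b -> F a' b -> sE M a a') /\
  (forall a, dom M a -> exists b, F a b) /\
  (forall b, dom N b -> exists a, F a b) /\
  (forall r a b, (forall i, F (a i) (b i)) -> (srel M r a <-> srel N r b)) /\
  (forall f a b c d, (forall i, F (a i) (b i)) -> F c d ->
      (sfun M f a c <-> sfun N f b d)).

Definition is_topology X (O : (X -> Prop) -> Prop) : Prop :=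
  O (fun _ => True) /\
  (forall U V, O U -> O V -> O (fun x => U x /\ V x)) /\
  (forall F : (X -> Prop) -> Prop, (forall U, F U -> O U) ->
     O (fun x => exists U, F U /\ U x)).

Definition gen_top X (B : (X -> Prop) -> Prop) (U : X -> Prop) : Prop :=
  forall O, is_topology O -> (forall V, B V -> O V) -> O U.

Definition cont X Y (BX : (X -> Prop) -> Prop) (BY : (Y -> Prop) -> Prop)
  (g : X -> Y) : Prop :=
  forall V, gen_top BY V -> gen_top BX (fun x => V (g x)).

Section Groupoid.
Variable T : forall n, form n -> form n -> Prop.

Definition MT := {M : structure | is_model T M}.

Definition MT_sub (U : MT -> Prop) : Prop :=
  (exists a, U = fun M => dom (proj1_sig M) a) \/
  (exists r a, U = fun M => srel (proj1_sig M) r a) \/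
  (exists a b, U = fun M => sE (proj1_sig M) a b) \/
  (exists f a b, U = fun M => sfun (proj1_sig M) f a b).

Definition IT := {x : MT * MT * (S -> S -> Prop) |
                   is_iso (proj1_sig x.1.1) (proj1_sig x.1.2) x.2}.
Definition dI (f : IT) : MT := (proj1_sig f).1.1.
Definition cI (f : IT) : MT := (proj1_sig f).1.2.
Definition fI (f : IT) : S -> S -> Prop := (proj1_sig f).2.

Definition IT_sub (U : IT -> Prop) : Prop :=
  (exists V, gen_top MT_sub V /\ U = fun f => V (dI f)) \/
  (exists V, gen_top MT_sub V /\ U = fun f => V (cI f)) \/
  (exists a b, U = fun f => dom (proj1_sig (dI f)) a /\ dom (proj1_sig (cI f)) b /\ fI f a b).

(* [[x | phi]] : pairs (M, [a]) with [a] a tuple of classes in phi^M *)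
Definition represents (M : structure) n (c : 'I_n -> S -> Prop) (a : 'I_n -> S) :=
  forall i, dom M (a i) /\ c i = sE M (a i).

Definition Elt n (phi : form n) :=
  {p : MT * ('I_n -> S -> Prop) |
     exists a, represents (proj1_sig p.1) p.2 a /\ sat (proj1_sig p.1) phi a}.
Definition pi1 n (phi : form n) (e : Elt phi) : MT := (proj1_sig e).1.
Definition cls n (phi : form n) (e : Elt phi) : 'I_n -> S -> Prop := (proj1_sig e).2.

Definition Elt_sub n (phi : form n) (U : Elt phi -> Prop) : Prop :=
  (exists V, gen_top MT_sub V /\ U = fun e => V (pi1 e)) \/
  (exists a : 'I_n -> S, U = fun e => represents (proj1_sig (pi1 e)) (cls e) a).

(* action theta(f, (M,[a])) = (N, f[a]) on the class tuples *)
Definition act_cls (f : IT) n (c : 'I_n -> S -> Prop) : 'I_n -> S -> Prop :=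
  fun i t => exists s, c i s /\ fI f s t.

(* morphisms of equivariant sheaves on I_T ⇉ M_T *)
Definition sheaf_hom n (phi : form n) m (psi : form m)
  (g : Elt phi -> Elt psi) : Prop :=
  cont (@Elt_sub n phi) (@Elt_sub m psi) g /\
  (forall e, pi1 (g e) = pi1 e) /\
  (forall (f : IT) (e e' : Elt phi), dI f = pi1 e -> pi1 e' = cI f ->
      cls e' = act_cls f (cls e) -> cls (g e') = act_cls f (cls (g e))).

End Groupoid.
End Sem.

(* Arrows of the syntactic category {x|phi} -> {y|psi}: T-provably
   functional formulas chi in context (y, x) = m + n (y first).        *)
Section SynCat.
Variable T : forall n, form n -> form n -> Prop.

Definition sig1 n m (k : 'I_(m + n)) : term (m + (m + n)) :=
  match split k with
  | inl j => Var (lshift (m + n) j)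
  | inr i => Var (rshift m (rshift m i))
  end.
Definition sig2 n m (k : 'I_(m + n)) : term (m + (m + n)) :=
  match split k with
  | inl j => Var (rshift m (lshift n j))
  | inr i => Var (rshift m (rshift m i))
  end.

Definition yeqs n m : form (m + (m + n)) :=
  foldr (fun j acc => FAnd (FEq (Var (lshift (m + n) j))
                               (Var (rshift m (lshift n j)))) acc)
        (FTop _) (enum 'I_m).

Definition prov_functional n (phi : form n) m (psi : form m)
  (chi : form (m + n)) : Prop :=
  Prov T chi (FAnd (fsubst phi (fun i => Var (rshift m i)))
                   (fsubst psi (fun j => Var (lshift n j)))) /\
  Prov T phi (Exs chi) /\
  Prov T (FAnd (fsubst chi (@sig1 n m)) (fsubst chi (@sig2 n m))) (@yeqs n m).
End SynCat.
End Syntax.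

Definition join S n m (b : 'I_m -> S) (a : 'I_n -> S) : 'I_(m + n) -> S :=
  fun k => match split k with inl j => b j | inr i => a i end.

(* Open sets of M_T and of [[x | phi]] are unions of sets cut out by formulas
   with parameters from S.  Continuity of a morphism g of equivariant sheaves
   therefore gives, for each element e of [[x | phi]], a formula th with
   parameters w and a representative a of e such that g sends every element
   satisfying th(w) and represented by a to one represented by a fixed b.
   Existentially quantifying the parameters of th, while recording their
   equality pattern with a and b, gives a formula chi_e(y, x); the arrow is
   the disjunction of all chi_e.  Its soundness in an arbitrary model N comes
   from equivariance: a witness z of chi_e in N is turned into the parameters
   themselves by relabelling N along a surjection q : S -> S with q (w) = z,
   which is an isomorphism of S-indexed models.  Such a q exists because S
   contains infinitely many points outside the finite tuple w.  Since T has
   enough S-indexed models, the semantic properties of chi are provable. *)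

From mathcomp Require Import all_boot zify.
From Stdlib Require Import ClassicalEpsilon FunctionalExtensionality.
From Stdlib Require Import PropExtensionality ProofIrrelevance.

Set Implicit Arguments.
Unset Strict Implicit.
Unset Printing Implicit Defensive.

Local Notation emi := excluded_middle_informative.
Local Notation cid := constructive_indefinite_description.

Section StructureFacts.
Variables (L : signature) (S : Type) (M : structure L S).
Hypothesis HM : is_structure M.

Lemma sE_sym a b : sE M a b -> sE M b a.
Proof. by case: HM => H _; apply: H. Qed.

Lemma sE_trans a b c : sE M a b -> sE M b c -> sE M a c.
Proof. by case: HM => _ [H _]; apply: H. Qed.

Lemma sE_doml a b : sE M a b -> dom M a.
Proof. by move=> h; apply: sE_trans h (sE_sym h). Qed.

Lemma sE_domr a b : sE M a b -> dom M b.
Proof. by move=> h; apply: sE_trans (sE_sym h) h. Qed.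

Lemma srel_dom r a : @srel _ _ M r a -> forall i, dom M (a i).
Proof. by case: HM => _ [_ [H _]]; apply: H. Qed.

Lemma srel_sE r a a' :
  (forall i, sE M (a i) (a' i)) -> @srel _ _ M r a -> @srel _ _ M r a'.
Proof. by case: HM => _ [_ [_ [H _]]]; apply: H. Qed.

Lemma sfun_dom f a b : @sfun _ _ M f a b -> (forall i, dom M (a i)) /\ dom M b.
Proof. by case: HM => _ [_ [_ [_ [H _]]]]; apply: H. Qed.

Lemma sfun_sE f a a' b b' : (forall i, sE M (a i) (a' i)) -> sE M b b' ->
  @sfun _ _ M f a b -> @sfun _ _ M f a' b'.
Proof. by case: HM => _ [_ [_ [_ [_ [H _]]]]]; apply: H. Qed.

Lemma sfun_total f a : (forall i, dom M (a i)) -> exists b, @sfun _ _ M f a b.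
Proof. by case: HM => _ [_ [_ [_ [_ [_ [H _]]]]]]; apply: H. Qed.

Lemma sfun_functional f a b b' :
  @sfun _ _ M f a b -> @sfun _ _ M f a b' -> sE M b b'.
Proof. by case: HM => _ [_ [_ [_ [_ [_ [_ H]]]]]]; apply: H. Qed.

Lemma teval_dom n env (t : term L n) b : teval M env t b -> dom M b.
Proof. by case: t => [i /sE_domr|f ts [a [_ /sfun_dom []]]]. Qed.

Lemma teval_sE n (env env' : 'I_n -> S) (t : term L n) b b' :
  (forall i, sE M (env i) (env' i)) -> sE M b b' ->
  teval M env t b -> teval M env' t b'.
Proof.
move=> Henv; elim: t b b' => [i|f ts IH] b b' Hb /=.
  by move=> h; apply: sE_trans (sE_sym (Henv i)) (sE_trans h Hb).
case=> a [Ha Hf]; have [Hda _] := sfun_dom Hf.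
by exists a; split => [j|]; [exact: IH (Hda j) (Ha j)|exact: sfun_sE Hda Hb Hf].
Qed.

Lemma sat_sE n (phi : form L n) (env env' : 'I_n -> S) :
  (forall i, sE M (env i) (env' i)) -> sat M phi env -> sat M phi env'.
Proof.
elim: phi env env' => {n} [n|n t u|n r ts|n p IHp q IHq|n I f IH|n p IH]
  env env' Henv /=.
- by [].
- case=> b [ht hu]; exists b; have db := teval_dom ht.
  by split; [apply: teval_sE ht|apply: teval_sE hu].
- case=> a [Ha Hr]; exists a; split => // j.
  exact: teval_sE (teval_dom (Ha j)) (Ha j).
- by case=> hp hq; split; [apply: IHp hp|apply: IHq hq].
- by case=> i h; exists i; apply: IH h.
- case=> s [Hs h]; exists s; split => //; apply: IH h => i.
  by rewrite /ext; case: (unlift ord0 i).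
Qed.

Lemma sat_FEq_Var n (i j : 'I_n) env :
  sat M (FEq (Var L i) (Var L j)) env <-> sE M (env i) (env j).
Proof.
split => /= [[c [hi hj]]|h]; first exact: sE_trans hi (sE_sym hj).
by exists (env j); split => //; apply: sE_domr h.
Qed.

Lemma represents_sE n (c : 'I_n -> S -> Prop) a a' :
  represents M c a -> represents M c a' -> forall i, sE M (a i) (a' i).
Proof.
move=> Ha Ha' i; have [_ Ec] := Ha i; have [da' Ec'] := Ha' i.
by move: da'; rewrite /dom -Ec' Ec.
Qed.

Lemma represents_sE_move n (c : 'I_n -> S -> Prop) a a' :
  represents M c a -> (forall i, sE M (a i) (a' i)) -> represents M c a'.
Proof.
move=> Ha Haa' i; have [_ ->] := Ha i; split; first exact: sE_domr (Haa' i).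
apply: functional_extensionality => t; apply: propositional_extensionality.
by split; [apply: sE_trans (sE_sym (Haa' i))|apply: sE_trans (Haa' i)].
Qed.
End StructureFacts.

Lemma represents_cls L S (M : structure L S) n (c c' : 'I_n -> S -> Prop) a :
  represents M c a -> represents M c' a -> c = c'.
Proof.
move=> Ha Ha'; apply: functional_extensionality => i.
by have [_ ->] := Ha i; have [_ ->] := Ha' i.
Qed.

Section Tuples.
Variable S : Type.

Definition tuple0 : 'I_0 -> S. Proof. by case. Defined.

Lemma joinEl n m (b : 'I_m -> S) (a : 'I_n -> S) (k : 'I_(m + n)) (j : 'I_m) :
  k = j :> nat -> join b a k = b j.
Proof.
rewrite /join => Ekj; case: splitP => [j' Ek|i Ek].
  by congr b; apply: val_inj; rewrite /= -Ek.
by have := ltn_ord j; lia.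
Qed.

Lemma joinEr n m (b : 'I_m -> S) (a : 'I_n -> S) (k : 'I_(m + n)) (i : 'I_n) :
  k = m + i :> nat -> join b a k = a i.
Proof.
rewrite /join => Eki; case: splitP => [j Ek|i' Ek].
  by have := ltn_ord j; lia.
by congr a; apply: val_inj => /=; lia.
Qed.

Lemma join_lshift n m (b : 'I_m -> S) (a : 'I_n -> S) j :
  join b a (lshift n j) = b j.
Proof. exact: joinEl. Qed.

Lemma join_rshift n m (b : 'I_m -> S) (a : 'I_n -> S) i :
  join b a (rshift m i) = a i.
Proof. exact: joinEr. Qed.

Lemma comp_join_lshift n m (b : 'I_m -> S) (a : 'I_n -> S) :
  (fun j => join b a (lshift n j)) = b.
Proof. by apply: functional_extensionality => j; apply: join_lshift. Qed.

Lemma comp_join_rshift n m (b : 'I_m -> S) (a : 'I_n -> S) :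
  (fun i => join b a (rshift m i)) = a.
Proof. by apply: functional_extensionality => i; apply: join_rshift. Qed.

Lemma join_rel (R : S -> S -> Prop) n m (b b' : 'I_m -> S) (a a' : 'I_n -> S) :
  (forall j, R (b j) (b' j)) -> (forall i, R (a i) (a' i)) ->
  forall k, R (join b a k) (join b' a' k).
Proof. by move=> Hb Ha k; rewrite /join; case: split. Qed.

Lemma ext0 n x (env : 'I_n -> S) : ext x env ord0 = x.
Proof. by rewrite /ext unlift_none. Qed.

Lemma ext_lift n x (env : 'I_n -> S) j : ext x env (lift ord0 j) = env j.
Proof. by rewrite /ext liftK. Qed.

Lemma ext_eta n (z : 'I_n.+1 -> S) :
  ext (z ord0) (fun i => z (lift ord0 i)) = z.
Proof.
apply: functional_extensionality => k.
by case: (unliftP ord0 k) => [j ->|->]; rewrite ?ext_lift ?ext0.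
Qed.

Lemma ext_join n K x (z : 'I_K -> S) (env : 'I_n -> S) :
  ext x (join z env) = join (ext x z) env.
Proof.
apply: functional_extensionality => k.
case: (unliftP ord0 k) => [j ->|->].
  2: by rewrite ext0 (@joinEl _ _ _ _ _ ord0) ?ext0.
rewrite ext_lift; case: (splitP j) => [j1 Ej|i Ej].
  rewrite (joinEl _ _ Ej) (@joinEl _ _ _ _ _ (lift ord0 j1)) ?ext_lift //=.
  by rewrite Ej.
by rewrite (joinEr _ _ Ej) (@joinEr _ _ _ _ _ i) //= Ej.
Qed.
End Tuples.

Section Renaming.
Variables (L : signature) (S : Type) (M : structure L S).

Lemma teval_fsubst_var n m (s : 'I_n -> term L m) (rho : 'I_n -> 'I_m) :
  (forall i, s i = Var L (rho i)) -> forall env (t : term L n) b,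
  teval M env (tsubst s t) b <-> teval M (fun i => env (rho i)) t b.
Proof.
move=> Hs env; elim=> [i|f ts IH] b /=; first by rewrite Hs.
by split; case=> a [Ha Hf]; exists a; split => // j; apply/IH.
Qed.

Lemma sat_fsubst_var n (phi : form L n) m (s : 'I_n -> term L m)
  (rho : 'I_n -> 'I_m) : (forall i, s i = Var L (rho i)) -> forall env,
  sat M (fsubst phi s) env <-> sat M phi (fun i => env (rho i)).
Proof.
elim: phi m s rho => {n} [n|n t u|n r ts|n p IHp q IHq|n I f IH|n p IH]
  m s rho Hs env /=.
- by [].
- by split; case=> b [ht hu]; exists b; split; apply/(teval_fsubst_var Hs).
- by split; case=> a [Ha Hr]; exists a; split => // j;
    apply/(teval_fsubst_var Hs).
- by rewrite (IHp _ _ _ Hs) (IHq _ _ _ Hs).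
- by split; case=> i h; exists i; apply/(IH i _ _ _ Hs).
- pose rho' i := if unlift ord0 i is Some j then lift ord0 (rho j) else ord0.
  have Hs' i : up s i = Var L (rho' i).
    by rewrite /up /rho'; case: (unlift ord0 i) => [j|] //; rewrite Hs.
  have Erho x : (fun i => ext x env (rho' i)) = ext x (fun i => env (rho i)).
    apply: functional_extensionality => i; rewrite /rho' /ext.
    by case: (unlift ord0 i) => [j|]; rewrite ?liftK ?unlift_none.
  by split; case=> x [Hx h]; exists x; split => //;
    move: h; rewrite (IH _ _ _ Hs') Erho.
Qed.

Lemma sat_rename n m (rho : 'I_n -> 'I_m) (phi : form L n) env :
  sat M (fsubst phi (fun i => Var L (rho i))) env <->
  sat M phi (fun i => env (rho i)).
Proof. exact: sat_fsubst_var. Qed.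

Lemma sat_fsubst_join n m p (phi : form L (m + n))
  (ly : 'I_m -> 'I_p) (lx : 'I_n -> 'I_p) env :
  sat M (fsubst phi (fun k => match split k with
                             | inl j => Var L (ly j)
                             | inr i => Var L (lx i) end)) env <->
  sat M phi (join (fun j => env (ly j)) (fun i => env (lx i))).
Proof.
pose rho k := match split k with inl j => ly j | inr i => lx i end.
have -> : join (fun j => env (ly j)) (fun i => env (lx i)) =
          fun k => env (rho k).
  by apply: functional_extensionality => k; rewrite /join /rho; case: split.
by apply: sat_fsubst_var => k; rewrite /rho; case: split.
Qed.

Lemma sat_Exs K n (phi : form L (K + n)) env :
  sat M (Exs phi) env <->
  exists z : 'I_K -> S, (forall i, dom M (z i)) /\ sat M phi (join z env).
Proof.
elim: K phi => [|K IH] phi /=.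
  have Ez (z : 'I_0 -> S) : join z env = env.
    by apply: functional_extensionality => k; apply: joinEr.
  split => [h|[z [_]]]; last by rewrite Ez.
  by exists (tuple0 S); split; [case|rewrite Ez].
rewrite IH; split.
  case=> z [Hz [x [Hx h]]]; exists (ext x z); split; last by rewrite -ext_join.
  by move=> i; rewrite /ext; case: (unlift ord0 i).
case=> z [Hz h]; exists (fun i => z (lift ord0 i)); split => //.
by exists (z ord0); rewrite ext_join ext_eta.
Qed.
End Renaming.

Section Conjunctions.
Variables (L : signature) (S : Type).

Definition bigA k (X : Type) (l : seq X) (F : X -> form L k) : form L k :=
  foldr (fun x acc => FAnd (F x) acc) (FTop L k) l.

Lemma sat_bigA (M : structure L S) k (X : eqType) (l : seq X)
  (F : X -> form L k) env :
  sat M (bigA l F) env <-> forall x, x \in l -> sat M (F x) env.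
Proof.
elim: l => [|x l IH] /=; first by [].
rewrite IH; split=> [[hx hl] y|H].
  by rewrite inE => /orP [/eqP ->|/hl].
by split=> [|y yl]; apply: H; rewrite inE ?eqxx ?yl ?orbT.
Qed.

Lemma sat_bigA_enum (M : structure L S) k (X : finType) (F : X -> form L k)
  env :
  sat M (bigA (enum X) F) env <-> forall x, sat M (F x) env.
Proof.
rewrite sat_bigA; split => H x; last by move=> _; apply: H.
by apply: H; rewrite mem_enum.
Qed.

Definition eqs k : form L (k + k) :=
  bigA (enum 'I_k) (fun i => FEq (Var L (lshift k i)) (Var L (rshift k i))).

Lemma sat_eqs (M : structure L S) (HM : is_structure M) k (a a' : 'I_k -> S) :
  sat M (eqs k) (join a a') <-> forall i, sE M (a i) (a' i).
Proof.
rewrite sat_bigA_enum.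
by split => H i; move: {H}(H i); rewrite sat_FEq_Var // join_lshift join_rshift.
Qed.

Definition eq_pattern K (w : 'I_K -> S) : form L K :=
  bigA (enum 'I_K) (fun i => bigA (enum 'I_K) (fun j =>
    if emi (w i = w j) then FEq (Var L i) (Var L j) else FTop L K)).

Lemma sat_eq_pattern (M : structure L S) (HM : is_structure M) K
  (w z : 'I_K -> S) :
  sat M (eq_pattern w) z <-> forall i j, w i = w j -> sE M (z i) (z j).
Proof.
have Eij i j : sat M (if emi (w i = w j) then FEq (Var L i) (Var L j)
                      else FTop L K) z <-> (w i = w j -> sE M (z i) (z j)).
  destruct (emi (w i = w j)) as [Ew|Nw]; last by split => // _ /Nw.
  by rewrite sat_FEq_Var //; split => // /(_ Ew).
rewrite sat_bigA_enum; split => H i.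
  by move=> j; apply/Eij; move/sat_bigA_enum: (H i).
by apply/sat_bigA_enum => j; apply/Eij; apply: H.
Qed.
End Conjunctions.

Section Relabel.
Variables (L : signature) (S : Type) (N : structure L S) (q : S -> S).
Hypothesis HN : is_structure N.
Hypothesis q_onto : forall y, exists x, q x = y.

(* The element [x] of [relabel N q] is the element [q x] of N. *)
Definition relabel : structure L S :=
  @Struct L S (fun x y => sE N (q x) (q y))
    (fun f a b => @sfun _ _ N f (fun i => q (a i)) (q b))
    (fun r a => @srel _ _ N r (fun i => q (a i))).

Lemma onto_tuple (I : Type) (a : I -> S) : exists a', (fun i => q (a' i)) = a.
Proof.
exists (fun i => proj1_sig (cid _ (q_onto (a i)))).
by apply: functional_extensionality => i; case: cid.
Qed.

Lemma relabel_structure : is_structure relabel.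
Proof.
rewrite /relabel /dom.
split; [|split; [|split; [|split; [|split; [|split; [|split]]]]]] => /=.
- by move=> a b; apply: sE_sym.
- by move=> a b c; apply: sE_trans.
- by move=> r a /(srel_dom HN).
- by move=> r a a'; apply: srel_sE.
- by move=> f a b /(sfun_dom HN).
- by move=> f a a' b b'; apply: sfun_sE.
- by move=> f a /(sfun_total HN) [b]; case: (q_onto b) => x <-; exists x.
- by move=> f a b b'; apply: sfun_functional.
Qed.

Lemma teval_relabel n (env : 'I_n -> S) (t : term L n) b :
  teval relabel env t b <-> teval N (fun i => q (env i)) t (q b).
Proof.
elim: t b => [i|f ts IH] b /=; first by [].
split; case=> a [Ha Hf].
  by exists (fun i => q (a i)); split => // j; apply/IH.
have [a' Ea'] := onto_tuple a; rewrite -Ea' in Ha Hf.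
by exists a'; split => // j; apply/IH.
Qed.

Lemma sat_relabel n (phi : form L n) (env : 'I_n -> S) :
  sat relabel phi env <-> sat N phi (fun i => q (env i)).
Proof.
elim: phi env => {n} [n|n t u|n r ts|n p IHp p' IHp'|n I f IH|n p IH] env /=.
- by [].
- split; case=> b [ht hu]; first by exists (q b); split; apply/teval_relabel.
  by case: (q_onto b) ht hu => x <- ht hu; exists x; split; apply/teval_relabel.
- split; case=> a [Ha Hr].
    by exists (fun i => q (a i)); split => // j; apply/teval_relabel.
  have [a' Ea'] := onto_tuple a; rewrite -Ea' in Ha Hr.
  by exists a'; split => // j; apply/teval_relabel.
- by rewrite IHp IHp'.
- by split; case=> i h; exists i; apply/IH.
- have Eext x : (fun i => q (ext x env i)) = ext (q x) (fun i => q (env i)).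
    apply: functional_extensionality => i.
    by rewrite /ext; case: (unlift ord0 i).
  split; case=> x [Hx h].
    by exists (q x); split; [apply: sE_domr Hx|move/IH: h; rewrite Eext].
  case: (q_onto x) Hx h => y <- Hy h; exists y; split => //.
  by apply/IH; rewrite Eext.
Qed.

Lemma relabel_model (T : forall n, form L n -> form L n -> Prop) :
  is_model T N -> is_model T relabel.
Proof.
case=> _ HT; split; first exact: relabel_structure.
move=> n phi psi Hphipsi env Henv /sat_relabel h; apply/sat_relabel.
exact: HT Hphipsi _ (fun i => Henv i) h.
Qed.

Definition relabel_map (u x : S) : Prop := sE N u (q x).

Lemma relabel_iso : is_iso N relabel relabel_map.
Proof.
rewrite /relabel_map /relabel /dom.
split; [|split; [|split; [|split; [|split; [|split; [|split]]]]]] => /=.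
- by move=> a b h; split; [apply: sE_doml h|apply: sE_domr h].
- move=> a a' b b' Ha Hb h.
  exact: sE_trans (sE_sym HN Ha) (sE_trans HN h Hb).
- by move=> a b b' h; apply: sE_trans (sE_sym HN h).
- by move=> a a' b h h'; apply: sE_trans h (sE_sym HN h').
- by move=> a Ha; case: (q_onto a) => x Ex; exists x; rewrite Ex.
- by move=> b Hb; exists (q b).
- move=> r a b Hab; split; first exact: srel_sE.
  by apply: srel_sE => // i; apply: sE_sym (Hab i).
- move=> f a b c d Hab Hcd; split; first exact: sfun_sE.
  by apply: sfun_sE (sE_sym HN Hcd) => // i; apply: sE_sym (Hab i).
Qed.
End Relabel.

Section HilbertHotel.
Variables (S : Type) (fresh : nat -> S).
Hypothesis fresh_inj : injective fresh.

Lemma factor_through_range K (w z : 'I_K -> S) :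
  exists f : S -> S, forall i, exists2 i', w i' = w i & f (w i) = z i'.
Proof.
exists (fun x => if emi (exists i, w i = x) is left H
                 then z (proj1_sig (cid _ H)) else x).
move=> i; case: emi => [H|[]]; last by exists i.
by case: (cid _ H) => i' Ei' /=; exists i'.
Qed.

(* Points of the form fresh (N0 + i), i < K, are sent onto the range of w,
   and the remaining fresh points are shifted down by K to make room. *)
Lemma surjective_patch K (w : 'I_K -> S) (f : S -> S) :
  exists q : S -> S, (forall y, exists x, q x = y) /\
                     forall i, q (w i) = f (w i).
Proof.
pose idx i := if emi (exists p, fresh p = w i) is left H
              then proj1_sig (cid _ H) else 0.
have idxE i p : fresh p = w i -> idx i = p.
  rewrite /idx => Ep; case: emi => [H|[]]; last by exists p.
  by case: (cid _ H) => p' Ep' /=; apply: fresh_inj; rewrite Ep Ep'.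
pose N0 := (\max_i idx i).+1.
have fresh_out p i : fresh (N0 + p) <> w i.
  move=> Ep; have := @leq_bigmax _ idx i; rewrite (idxE _ _ Ep) /N0; lia.
pose q x :=
  if emi (exists i, w i = x) is left _ then f x else
  if emi (exists i : 'I_K, fresh (N0 + i) = x) is left H
  then w (proj1_sig (cid _ H)) else
  if emi (exists p, fresh (N0 + K + p) = x) is left H
  then fresh (N0 + proj1_sig (cid _ H)) else x.
exists q; split; last first.
  by move=> i; rewrite /q; case: emi => // [[]]; exists i.
move=> y; case: (classic (exists i, w i = y)) => [[i <-]|Hw].
  exists (fresh (N0 + i)); rewrite /q.
  case: emi => [[j Ej]|_]; first by case: (fresh_out i j).
  case: emi => [H|[]]; last by exists i.
  case: (cid _ H) => i' /fresh_inj/eqP /=; rewrite eqn_add2l => /eqP Ei.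
  by congr w; apply: val_inj.
case: (classic (exists p, fresh (N0 + p) = y)) => [[p <-]|Hf].
  exists (fresh (N0 + K + p)); rewrite /q.
  case: emi => [[j Ej]|_]; first by case: (fresh_out (K + p) j); rewrite addnA.
  case: emi => [H|_].
    by exfalso; case: H => i /fresh_inj; have := ltn_ord i; lia.
  case: emi => [H|[]]; last by exists p.
  by case: (cid _ H) => p' /fresh_inj/eqP /=; rewrite eqn_add2l => /eqP ->.
exists y; rewrite /q.
case: emi => [//|_]; case: emi => [[i Ei]|_]; first by case: Hf; exists i.
by case: emi => [[p Ep]|//]; case: Hf; exists (K + p); rewrite addnA.
Qed.
End HilbertHotel.

Section ParamFormulas.
Variables (L : signature) (S : Type).

Record pform := PForm {
  pf_arity : nat;
  pf_form : form L pf_arity;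
  pf_param : 'I_pf_arity -> S }.
Arguments pf_param : clear implicits.

Definition pf_holds (M : structure L S) (p : pform) : Prop :=
  sat M (pf_form p) (pf_param p).

Definition pf_dom (M : structure L S) (p : pform) : Prop :=
  forall i, dom M (pf_param p i).

Definition pf_true : pform := PForm (FTop L 0) (tuple0 S).

Definition pf_and (p1 p2 : pform) : pform :=
  PForm (FAnd (fsubst (pf_form p1) (fun i => Var L (lshift (pf_arity p2) i)))
              (fsubst (pf_form p2) (fun i => Var L (rshift (pf_arity p1) i))))
        (join (pf_param p1) (pf_param p2)).

Lemma pf_holds_and M p1 p2 :
  pf_holds M (pf_and p1 p2) <-> pf_holds M p1 /\ pf_holds M p2.
Proof.
by rewrite /pf_holds /= !sat_rename comp_join_lshift comp_join_rshift.
Qed.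

Lemma pf_dom_and M p1 p2 :
  pf_dom M p1 -> pf_dom M p2 -> pf_dom M (pf_and p1 p2).
Proof. by move=> H1 H2 k; rewrite /pf_dom /=; apply: join_rel. Qed.
End ParamFormulas.
Arguments pf_param {L S} p _.

Section ModelSpace.
Variables (L : signature) (S : Type) (T : forall n, form L n -> form L n -> Prop).

Lemma MT_struct (M : MT S T) : is_structure (proj1_sig M).
Proof. exact: (proj2_sig M).1. Qed.

Definition MT_definable_open (V : MT S T -> Prop) : Prop :=
  forall M, V M -> exists p : pform L S,
    [/\ pf_holds (proj1_sig M) p, pf_dom (proj1_sig M) p &
        forall M', pf_holds (proj1_sig M') p -> V M'].

Lemma MT_definable_open_topology : is_topology MT_definable_open.
Proof.
split; [|split].
- by move=> M _; exists (pf_true L S); split => // [[]].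
- move=> U V HU HV M [UM VM].
  have [p1 [h1 d1 H1]] := HU M UM; have [p2 [h2 d2 H2]] := HV M VM.
  exists (pf_and p1 p2); split; [exact/pf_holds_and|exact: pf_dom_and|].
  by move=> M' /pf_holds_and [/H1 ? /H2 ?].
- move=> F HF M [U [FU UM]]; have [p [h d H]] := HF U FU M UM.
  by exists p; split => // M' /H; exists U.
Qed.

Lemma MT_sub_definable_open V : MT_sub V -> MT_definable_open V.
Proof.
have eq_open a b : MT_definable_open (fun M : MT S T => sE (proj1_sig M) a b).
  move=> M Hab; have HM := MT_struct M.
  exists (PForm (eqs L 1) (join (fun=> a) (fun=> b))); split.
  - by rewrite /pf_holds sat_eqs.
  - by apply: join_rel => _; [apply: sE_doml Hab|apply: sE_domr Hab].
  - by move=> M' /(sat_eqs (MT_struct M')) /(_ ord0).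
case=> [[a ->]|[[r [a ->]]|[[a [b ->]]|[f [a [b ->]]]]]]; try exact: eq_open.
- move=> M Hr; have HM := MT_struct M; have Ha := srel_dom HM Hr.
  exists (PForm (FRel (fun j => Var L j)) a); split => //.
  + by exists a; split.
  + move=> M' [a' [Ha' Hr']] /=; have HM' := MT_struct M'.
    by apply: (srel_sE HM' _ Hr') => j; exact: (sE_sym HM' (Ha' j)).
- move=> M Hf; have HM := MT_struct M; have [Ha Hb] := sfun_dom HM Hf.
  exists (PForm (FEq (App (fun j => Var L (lift ord0 j))) (Var L ord0))
                (ext b a)); split.
  + exists b; rewrite /= ext0; split => //.
    by exists a; split => // j; rewrite /= ext_lift; apply: Ha.
  + by move=> i /=; rewrite /ext; case: (unlift ord0 i).
  + move=> M' [c [[a' [Ha' Hf']] Hc]]; have HM' := MT_struct M'.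
    move: Ha' Hc; rewrite /= ext0 => Ha' Hc.
    apply: (sfun_sE HM' _ (sE_sym HM' Hc) Hf') => j.
    by move: (Ha' j); rewrite ext_lift => /(sE_sym HM').
Qed.

Lemma open_MT_definable V : gen_top (@MT_sub L S T) V -> MT_definable_open V.
Proof.
move=> H; apply: H; first exact: MT_definable_open_topology.
exact: MT_sub_definable_open.
Qed.

Section Elements.
Variables (n : nat) (phi : form L n).
Local Notation str_of e := (proj1_sig (@pi1 L S T n phi e)).

Lemma Elt_rep (e : Elt S T phi) :
  exists a, represents (str_of e) (cls e) a /\ sat (str_of e) phi a.
Proof. exact: proj2_sig e. Qed.

Lemma Elt_eq (e e' : Elt S T phi) : pi1 e = pi1 e' -> cls e = cls e' -> e = e'.
Proof.
case: e e' => [[M c] p] [[M' c'] p']; rewrite /pi1 /cls /= => EM Ec.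
by subst; congr exist; apply: proof_irrelevance.
Qed.

Definition point (M : MT S T) (a : 'I_n -> S)
  (Ha : forall i, dom (proj1_sig M) (a i)) (Hphi : sat (proj1_sig M) phi a) :
  Elt S T phi :=
  exist _ (M, fun i => sE (proj1_sig M) (a i))
          (ex_intro _ a (conj (fun i => conj (Ha i) erefl) Hphi)).

Lemma represents_point M a Ha Hphi :
  represents (proj1_sig M) (cls (@point M a Ha Hphi)) a.
Proof. by move=> i; split. Qed.

Definition Elt_definable_open (U : Elt S T phi -> Prop) : Prop :=
  forall e a, U e -> represents (str_of e) (cls e) a -> exists p : pform L S,
    [/\ pf_holds (str_of e) p, pf_dom (str_of e) p &
        forall e', pf_holds (str_of e') p ->
                   represents (str_of e') (cls e') a -> U e'].

Lemma Elt_definable_open_topology : is_topology Elt_definable_open.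
Proof.
split; [|split].
- by move=> e a _ _; exists (pf_true L S); split => // [[]].
- move=> U V HU HV e a [Ue Ve] Ha.
  have [p1 [h1 d1 H1]] := HU e a Ue Ha; have [p2 [h2 d2 H2]] := HV e a Ve Ha.
  exists (pf_and p1 p2); split; [exact/pf_holds_and|exact: pf_dom_and|].
  by move=> e' /pf_holds_and [h1' h2'] Ha'; split; [apply: H1|apply: H2].
- move=> F HF e a [U [FU Ue]] Ha; have [p [h d H]] := HF U FU e a Ue Ha.
  by exists p; split => // e' h' Ha'; exists U; split => //; apply: H.
Qed.

Lemma Elt_sub_definable_open U : Elt_sub U -> Elt_definable_open U.
Proof.
case=> [[V [HV ->]]|[a' ->]] e a /=.
  move=> /(open_MT_definable HV) [p [h d H]] _.
  by exists p; split => // e' /H.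
move=> Ha' Ha; have HM := MT_struct (pi1 e).
exists (PForm (eqs L n) (join a a')); split.
- by rewrite /pf_holds sat_eqs //; apply: represents_sE Ha Ha'.
- by apply: join_rel => i; [case: (Ha i)|case: (Ha' i)].
- move=> e' h' Hae'; have HM' := MT_struct (pi1 e').
  by apply: (represents_sE_move HM' Hae'); move/(sat_eqs HM'): h'.
Qed.

Lemma open_Elt_definable U :
  gen_top (@Elt_sub L S T n phi) U -> Elt_definable_open U.
Proof.
move=> H; apply: H; first exact: Elt_definable_open_topology.
exact: Elt_sub_definable_open.
Qed.
End Elements.

Definition relabelMT (N : MT S T) (q : S -> S)
  (q_onto : forall y, exists x, q x = y) : MT S T :=
  exist _ (relabel (proj1_sig N) q)
          (relabel_model (MT_struct N) q_onto (proj2_sig N)).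

Definition relabelIT (N : MT S T) q q_onto : IT S T :=
  exist _ (N, @relabelMT N q q_onto, relabel_map (proj1_sig N) q)
          (relabel_iso (MT_struct N) q_onto).

Lemma act_cls_represents (f : IT S T) n (c : 'I_n -> S -> Prop) a :
  represents (proj1_sig (dI f)) c a -> act_cls f c = fun i => fI f (a i).
Proof.
have HM := MT_struct (dI f); have [fdom [fsat _]] := proj2_sig f.
move=> Ha; apply: functional_extensionality => i.
apply: functional_extensionality => t; apply: propositional_extensionality.
rewrite /act_cls; have [da ->] := Ha i.
split => [[s [Eas Hst]]|Hat]; last by exists (a i).
exact: (fsat _ _ _ _ (sE_sym HM Eas) (fdom _ _ Hst).2 Hst).
Qed.

(* Equivariance along the isomorphism N ~ relabel N q. *)
Lemma hom_relabel n (phi : form L n) m (psi : form L m)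
  (g : Elt S T phi -> Elt S T psi) (Hg : sheaf_hom g)
  (N : MT S T) q q_onto (e0 e1 : Elt S T phi) a b :
  pi1 e0 = N -> pi1 e1 = @relabelMT N q q_onto ->
  represents (proj1_sig N) (cls e0) (fun i => q (a i)) ->
  represents (relabel (proj1_sig N) q) (cls e1) a ->
  represents (relabel (proj1_sig N) q) (cls (g e1)) b ->
  represents (proj1_sig N) (cls (g e0)) (fun j => q (b j)).
Proof.
move=> E0 E1 Ha0 Ha1 Hb1; have HN := MT_struct N.
have [_ [pi1g equiv]] := Hg.
have [b0 [Hb0 _]] := Elt_rep (g e0); rewrite pi1g E0 in Hb0.
have Ecls : cls e1 = act_cls (relabelIT N q_onto) (cls e0).
  rewrite (act_cls_represents (f := relabelIT N q_onto) Ha0).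
  by apply: functional_extensionality => i; have [_ ->] := Ha1 i.
have := equiv (relabelIT N q_onto) e0 e1 (esym E0) E1 Ecls.
rewrite (act_cls_represents (f := relabelIT N q_onto) Hb0) => Eg.
apply: (represents_sE_move HN Hb0) => j; apply: (sE_sym HN).
have [x qx] := q_onto (b0 j).
have [_] := Hb1 j; rewrite Eg => /(congr1 (@^~ x)) /=.
by rewrite /fI /= /relabel_map qx => <-; case: (Hb0 j).
Qed.
End ModelSpace.

Section GraphFormula.
Variables (L : signature) (S : Type) (T : forall n, form L n -> form L n -> Prop).
Variables (n m : nat) (phi : form L n) (psi : form L m).
Variable g : Elt S T phi -> Elt S T psi.
Hypothesis Hg : sheaf_hom g.
Local Notation str_of e := (proj1_sig (pi1 e)).

Lemma pi1_hom e : pi1 (g e) = pi1 e.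
Proof. by case: Hg => _ [H _]; apply: H. Qed.

Record chart := Chart {
  ch_nbhd : pform L S;
  ch_src : 'I_n -> S;
  ch_tgt : 'I_m -> S }.

Definition is_chart (e : Elt S T phi) (c : chart) : Prop :=
  [/\ pf_holds (str_of e) (ch_nbhd c), pf_dom (str_of e) (ch_nbhd c),
      represents (str_of e) (cls e) (ch_src c),
      represents (str_of e) (cls (g e)) (ch_tgt c) &
      forall e', pf_holds (str_of e') (ch_nbhd c) ->
        represents (str_of e') (cls e') (ch_src c) ->
        represents (str_of e') (cls (g e')) (ch_tgt c)].

Lemma exists_chart e : exists c, is_chart e c.
Proof.
have [b [Hb _]] := Elt_rep (g e); have [a [Ha _]] := Elt_rep e.
pose U (e'' : Elt S T psi) := represents (str_of e'') (cls e'') b.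
have /(proj1 Hg) /open_Elt_definable HU : gen_top (@Elt_sub L S T m psi) U.
  by move=> O _ Hsub; apply: Hsub; right; exists b.
have [p [h d H]] := HU e a Hb Ha.
exists (Chart p a b); split => //; first by rewrite -pi1_hom.
by move=> e' h' /(H e' h'); rewrite /U pi1_hom.
Qed.

Definition chart_of e : chart := proj1_sig (cid _ (exists_chart e)).

Lemma chart_ofP e : is_chart e (chart_of e).
Proof. exact: proj2_sig (cid _ (exists_chart e)). Qed.

Definition chart_points c : 'I_(pf_arity (ch_nbhd c) + (m + n)) -> S :=
  join (pf_param (ch_nbhd c)) (join (ch_tgt c) (ch_src c)).
Arguments chart_points : clear implicits.

Definition chart_body c : form L (pf_arity (ch_nbhd c) + (m + n)) :=
  FAnd (fsubst (pf_form (ch_nbhd c)) (fun i => Var L (lshift (m + n) i)))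
 (FAnd (eq_pattern L (chart_points c))
       (fsubst phi (fun i =>
          Var L (rshift (pf_arity (ch_nbhd c)) (rshift m i))))).

Definition graph_formula : form L (m + n) :=
  FDisj (fun e => Exs (chart_body (chart_of e))).

Lemma sat_chart_body (M : structure L S) (HM : is_structure M) c u env :
  sat M (chart_body c) (join u env) <->
  [/\ sat M (pf_form (ch_nbhd c)) u,
      forall i j, chart_points c i = chart_points c j ->
        sE M (join u env i) (join u env j) &
      sat M phi (fun i => env (rshift m i))].
Proof.
rewrite /chart_body /= !sat_rename sat_eq_pattern // comp_join_lshift.
have -> : (fun i => join u env (rshift _ (rshift m i))) =
          fun i => env (rshift m i).
  by apply: functional_extensionality => i; rewrite join_rshift.
by split => [[? [? ?]]|[]].
Qed.

Lemma graph_formula_graph e a b :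
  represents (str_of e) (cls e) a -> represents (str_of e) (cls (g e)) b ->
  sat (str_of e) graph_formula (join b a).
Proof.
move=> Ha Hb; have HM := MT_struct (pi1 e); exists e.
have [hp dp Hsrc Htgt _] := chart_ofP e; move: (chart_of e) hp dp Hsrc Htgt.
case=> p a0 b0 /= hp dp Hsrc Htgt.
have Hpts : forall k, sE (str_of e) (join (pf_param p) (join b a) k)
                                   (chart_points (Chart p a0 b0) k).
  apply: join_rel => [i|]; first exact: dp.
  by apply: join_rel; apply: represents_sE.
apply/sat_Exs; exists (pf_param p); split => //.
apply/(@sat_chart_body _ HM (Chart p a0 b0)); split => //.
- move=> i j Eij; apply: (sE_trans HM (Hpts i)); rewrite Eij.
  exact: (sE_sym HM (Hpts j)).
- have [a1 [Ha1 Hphi]] := Elt_rep e; rewrite comp_join_rshift.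
  exact: (sat_sE HM (represents_sE Ha1 Ha) Hphi).
Qed.

Section Soundness.
Variable fresh : nat -> S.
Hypothesis fresh_inj : injective fresh.

Lemma graph_formula_sound (N : MT S T) env :
  (forall k, dom (proj1_sig N) (env k)) ->
  sat (proj1_sig N) graph_formula env ->
  exists e0, [/\ pi1 e0 = N,
    represents (proj1_sig N) (cls e0) (fun i => env (rshift m i)) &
    represents (proj1_sig N) (cls (g e0)) (fun j => env (lshift n j))].
Proof.
move=> Hd [e]; have HN := MT_struct N.
have [_ _ _ _ Hloc] := chart_ofP e; move: (chart_of e) Hloc.
case=> p a b Hloc /sat_Exs [u [Hu]].
move/(@sat_chart_body _ HN (Chart p a b)) => [Hth Hpat Hphi].
set w := chart_points _ in Hpat.
have [f Hf] := factor_through_range w (join u env).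
have [q [q_onto Hq]] := surjective_patch fresh_inj w f.
have Hqw k : sE (proj1_sig N) (q (w k)) (join u env k).
  by have [k' Ek' Efk'] := Hf k; rewrite Hq Efk'; apply: Hpat.
have Hparam i : sE (proj1_sig N) (q (pf_param p i)) (u i).
  by move: (Hqw (lshift _ i)); rewrite /w /chart_points !join_lshift.
have Hsrc i : sE (proj1_sig N) (q (a i)) (env (rshift m i)).
  move: (Hqw (rshift _ (rshift m i))).
  by rewrite /w /chart_points !join_rshift.
have Htgt j : sE (proj1_sig N) (q (b j)) (env (lshift n j)).
  move: (Hqw (rshift _ (lshift n j))).
  by rewrite /w /chart_points !join_rshift !join_lshift.
have Hp' : pf_holds (relabel (proj1_sig N) q) p.
  rewrite /pf_holds; apply/(sat_relabel HN q_onto).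
  exact: (sat_sE HN (fun i => sE_sym HN (Hparam i)) Hth).
have Hphi' : sat (relabel (proj1_sig N) q) phi a.
  apply/(sat_relabel HN q_onto).
  exact: (sat_sE HN (fun i => sE_sym HN (Hsrc i)) Hphi).
have Ha' i : dom (relabel (proj1_sig N) q) (a i) := sE_doml HN (Hsrc i).
pose e1 := point (M := relabelMT N q_onto) Ha' Hphi'.
pose e0 := point (M := N) (fun i => Hd (rshift m i)) Hphi.
have Ha0 : represents (proj1_sig N) (cls e0) (fun i => q (a i)).
  apply: (represents_sE_move HN (represents_point (M := N) _ Hphi)) => i.
  exact: (sE_sym HN (Hsrc i)).
have Ha1 : represents (relabel (proj1_sig N) q) (cls e1) a :=
  represents_point (M := relabelMT N q_onto) Ha' Hphi'.
have Hb0 := hom_relabel Hg (e0 := e0) (e1 := e1) erefl erefl Ha0 Ha1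
  (Hloc e1 Hp' Ha1).
by exists e0; split => //; apply: (represents_sE_move HN Hb0).
Qed.

Lemma graph_formula_sub (M : MT S T) env :
  (forall k, dom (proj1_sig M) (env k)) ->
  sat (proj1_sig M) graph_formula env ->
  sat (proj1_sig M) (FAnd (fsubst phi (fun i => Var L (rshift m i)))
                          (fsubst psi (fun j => Var L (lshift n j)))) env.
Proof.
move=> Hd /(graph_formula_sound Hd) [e0 [<- Ha Hb]].
have HM := MT_struct (pi1 e0).
have [a0 [Ha0 Hphi]] := Elt_rep e0; have [b0 [Hb0 Hpsi]] := Elt_rep (g e0).
rewrite pi1_hom in Hb0 Hpsi; rewrite /= !sat_rename.
by split; [exact: (sat_sE HM (represents_sE Ha0 Ha) Hphi)
          |exact: (sat_sE HM (represents_sE Hb0 Hb) Hpsi)].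
Qed.

Lemma graph_formula_functional (M : MT S T) env :
  (forall k, dom (proj1_sig M) (env k)) ->
  sat (proj1_sig M) (FAnd (fsubst graph_formula (@sig1 L n m))
                          (fsubst graph_formula (@sig2 L n m))) env ->
  sat (proj1_sig M) (yeqs L n m) env.
Proof.
move=> Hd [h1 h2]; have HM := MT_struct M.
have {}h1 := (sat_fsubst_join _ graph_formula (lshift (m + n))
  (fun i => rshift m (rshift m i)) env).1 h1.
have {}h2 := (sat_fsubst_join _ graph_formula (fun j => rshift m (lshift n j))
  (fun i => rshift m (rshift m i)) env).1 h2.
have Hd' (ly : 'I_m -> _) (lx : 'I_n -> _) k :
  dom (proj1_sig M) (join (fun j => env (ly j)) (fun i => env (lx i)) k).
  by rewrite /join; case: split.
have [e1 [E1 Ha1 Hb1]] := graph_formula_sound (Hd' _ _) h1.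
have [e2 [E2 Ha2 Hb2]] := graph_formula_sound (Hd' _ _) h2.
rewrite !comp_join_rshift !comp_join_lshift in Ha1 Ha2 Hb1 Hb2.
have E12 : e1 = e2.
  by apply: Elt_eq; [rewrite E1 E2|exact: (represents_cls Ha1 Ha2)].
apply/sat_bigA_enum => j; rewrite sat_FEq_Var //.
by rewrite -E12 in Hb2; exact: (represents_sE Hb1 Hb2 j).
Qed.
End Soundness.

Lemma graph_formula_total (M : MT S T) a :
  (forall i, dom (proj1_sig M) (a i)) -> sat (proj1_sig M) phi a ->
  sat (proj1_sig M) (Exs graph_formula) a.
Proof.
move=> Hd Hphi; pose e0 := point (M := M) Hd Hphi.
have [b [Hb _]] := Elt_rep (g e0); rewrite pi1_hom in Hb.
apply/sat_Exs; exists b; split; first by move=> j; case: (Hb j).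
exact: graph_formula_graph (represents_point _ _) Hb.
Qed.
End GraphFormula.

Theorem corollary3p13 (L : signature) (S : Type)
  (T : forall n, form L n -> form L n -> Prop)
  (* |S| >= kappa >= |Sigma| + aleph_0 *)
  (hS : exists h : (Fsym L + Rsym L) + nat -> S, injective h)
  (* T has enough S-indexed models *)
  (enough : forall n (phi psi : form L n),
     (forall (M : MT S T) (env : 'I_n -> S),
        (forall i, dom (proj1_sig M) (env i)) ->
        sat (proj1_sig M) phi env -> sat (proj1_sig M) psi env) ->
     Prov T phi psi) :
  forall n (phi : form L n) m (psi : form L m)
         (g : Elt S T phi -> Elt S T psi),
    sheaf_hom g ->
    exists chi : form L (m + n),
      prov_functional T phi psi chi /\
      forall e : Elt S T phi,
        exists (a : 'I_n -> S) (b : 'I_m -> S),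
          represents (proj1_sig (pi1 e)) (cls e) a /\
          represents (proj1_sig (pi1 (g e))) (cls (g e)) b /\
          sat (proj1_sig (pi1 e)) chi (join b a).
Proof.
move=> n phi m psi g Hg; have [h h_inj] := hS.
have fresh_inj : injective (fun k => h (inr k)) by move=> k l /h_inj [].
exists (graph_formula Hg); split; first split; [|split|].
- by apply: enough => M env; exact: (graph_formula_sub fresh_inj).
- by apply: enough => M a; exact: (graph_formula_total Hg).
- by apply: enough => M env; exact: (graph_formula_functional fresh_inj).
- move=> e; have [a [Ha _]] := Elt_rep e; have [b [Hb _]] := Elt_rep (g e).
  exists a, b; split => //; split => //.
  by apply: graph_formula_graph => //; rewrite -(pi1_hom Hg).
Qed.
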